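(* Let $\mathfrak k$ be the maximal compact subalgebra of a Kac--Moody algebra over a field $F$ of characteristic $0$ with simply laced diagram $D=(V,E)$, with Berman generators $X_1,\dots,X_n$, and let $L=F(I)$ with $I^2=-1$. (a) If $\rho:\mathfrak k\to\operatorname{End}(L^s)$ is a generalized spin representation, then $\rho(X_i)\rho(X_j)=\rho(X_j)\rho(X_i)$ whenever $i\ne j$ and $\{v_i,v_j\}\notin E$, and $\rho(X_i)\rho(X_j)=-\rho(X_j)\rho(X_i)$ whenever $\{v_i,v_j\}\in E$. (b) Conversely, if $A_1,\dots,A_n\in L^{s\times s}$ satisfy $A_i^2=-\tfrac14\mathrm{id}_s$ for all $i$, $A_iA_j=A_jA_i$ for $i\ne j$ non-adjacent, and $A_iA_j=-A_jA_i$ for $v_i,v_j$ adjacent, then $X_i\mapsto A_i$ extends to a Lie algebra homomorphism $\mathfrak k\to\operatorname{End}(L^s)$, which is a generalized spin representation.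
   Context: Berman's theorem: $\mathfrak k$ is generated by $X_i=e_i-f_i$ and is the Lie algebra with generators $X_1,\dots,X_n$ and defining relations $[X_i,[X_i,X_j]]=-X_j$ if $v_i,v_j$ are adjacent and $[X_i,X_j]=0$ for non-adjacent $i\ne j$. Here $\mathfrak k$ is viewed as a Lie algebra over $F$ and $\operatorname{End}(L^s)$ as an $F$-Lie algebra with the commutator bracket. A generalized spin representation of $\mathfrak k$ is a Lie algebra homomorphism $\rho:\mathfrak k\to\operatorname{End}(L^s)$ (for some $s\ge1$) such that $\rho(X_i)^2=-\tfrac14\,\mathrm{id}_s$ for $i=1,\dots,n$. *)

From HB Require Import structures.
From mathcomp Require Import all_boot all_order all_algebra all_field.
Set Implicit Arguments. Unset Strict Implicit. Unset Printing Implicit Defensive.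
Import Order.TTheory GRing.Theory Num.Theory.
Local Open Scope ring_scope.

Record lieAlg (F : fieldType) := LieAlg {
  lie_car :> zmodType;
  lie_scale : F -> lie_car -> lie_car;
  lie_br : lie_car -> lie_car -> lie_car;
  lie_scaleDr : forall a x y, lie_scale a (x + y) = lie_scale a x + lie_scale a y;
  lie_scaleDl : forall a b x, lie_scale (a + b) x = lie_scale a x + lie_scale b x;
  lie_scaleA : forall a b x, lie_scale a (lie_scale b x) = lie_scale (a * b) x;
  lie_scale1 : forall x, lie_scale 1 x = x;
  lie_brl : forall a x y z,
      lie_br (lie_scale a x + y) z = lie_scale a (lie_br x z) + lie_br y z;
  lie_brr : forall a x y z,
      lie_br z (lie_scale a x + y) = lie_scale a (lie_br z x) + lie_br z y;
  lie_br_alt : forall x, lie_br x x = 0;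
  lie_jacobi : forall x y z,
      lie_br x (lie_br y z) + lie_br y (lie_br z x) + lie_br z (lie_br x y) = 0
}.

Definition lie_hom (F : fieldType) (M N : lieAlg F) (f : M -> N) : Prop :=
  (forall a x y, f (lie_scale a x + y) = lie_scale a (f x) + f y) /\
  (forall x y, f (lie_br x y) = lie_br (f x) (f y)).

Definition berman_rel (F : fieldType) (n : nat) (adj : rel 'I_n)
    (M : lieAlg F) (Y : 'I_n -> M) : Prop :=
  (forall i j, adj i j -> lie_br (Y i) (lie_br (Y i) (Y j)) = - Y j) /\
  (forall i j, i != j -> ~~ adj i j -> lie_br (Y i) (Y j) = 0).

Definition berman_presented (F : fieldType) (n : nat) (adj : rel 'I_n)
    (K : lieAlg F) (X : 'I_n -> K) : Prop :=
  berman_rel adj X /\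
  forall (M : lieAlg F) (Y : 'I_n -> M), berman_rel adj Y ->
    exists f : K -> M, [/\ lie_hom f, (forall i, f (X i) = Y i) &
      forall g : K -> M, lie_hom g -> (forall i, g (X i) = Y i) -> g =1 f].

(* Lie algebra homomorphisms K -> End(L^s) = L^{s x s}, where End(L^s) is an
   F-Lie algebra with scaling a *: A := (a%:A) *: A and commutator bracket. *)
Definition lie_hom_End (F : fieldType) (L : fieldExtType F) (s : nat)
    (K : lieAlg F) (rho : K -> 'M[L]_s) : Prop :=
  (forall a x y, rho (lie_scale a x + y) = (a%:A : L) *: rho x + rho y) /\
  (forall x y, rho (lie_br x y) = rho x *m rho y - rho y *m rho x).

Definition gen_spin_rep (F : fieldType) (L : fieldExtType F) (s n : nat)
    (K : lieAlg F) (X : 'I_n -> K) (rho : K -> 'M[L]_s) : Prop :=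
  lie_hom_End rho /\
  forall i, rho (X i) *m rho (X i) = (- (4%:R : L)^-1)%:M.

From HB Require Import structures.
From mathcomp Require Import all_boot all_order all_algebra all_field ring.
Set Implicit Arguments. Unset Strict Implicit. Unset Printing Implicit Defensive.
Import Order.TTheory GRing.Theory Num.Theory.
Local Open Scope ring_scope.

(* Part (b): the matrices A_i satisfy the Berman relations in EndLie, so
      the universal property of K provides the homomorphism rho. *)

(* A zero-sum identity in an abelian group; it is the Jacobi identity of a
   commutator bracket once products are expanded. *)
Lemma jacobi_cancel (Z : zmodType) (p q r t u v : Z) :
  (p - q - (r - t)) + (r - u - (v - q)) + (v - t - (p - u)) = 0.
Proof.
rewrite !opprB !addrA !subrK (addrAC (p - q) t (- u)) (addrAC (p - q - u) t q) addrK.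
by rewrite (addrAC (p - q) (- u) q) !subrK subrr.
Qed.

Section CommutatorLieAlgebra.
Variables (F : fieldType) (L : fieldExtType F) (s : nat).

Definition end_scale (a : F) (A : 'M[L]_s) : 'M[L]_s := (a%:A : L) *: A.

Definition end_br (A B : 'M[L]_s) : 'M[L]_s := A *m B - B *m A.

Lemma end_scaleDr a A B : end_scale a (A + B) = end_scale a A + end_scale a B.
Proof. exact: scalerDr. Qed.

Lemma end_scaleDl a b A : end_scale (a + b) A = end_scale a A + end_scale b A.
Proof. by rewrite /end_scale !scalerDl. Qed.

Lemma end_scaleA a b A : end_scale a (end_scale b A) = end_scale (a * b) A.
Proof. by rewrite /end_scale scalerA -scalerAl mul1r scalerA. Qed.

Lemma end_scale1 A : end_scale 1 A = A.
Proof. by rewrite /end_scale !scale1r. Qed.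

Lemma end_brl a A B C :
  end_br (end_scale a A + B) C = end_scale a (end_br A C) + end_br B C.
Proof.
rewrite /end_br /end_scale mulmxDl mulmxDr -scalemxAl -scalemxAr scalerBr.
by rewrite opprD addrACA.
Qed.

Lemma end_brr a A B C :
  end_br C (end_scale a A + B) = end_scale a (end_br C A) + end_br C B.
Proof.
rewrite /end_br /end_scale mulmxDl mulmxDr -scalemxAl -scalemxAr scalerBr.
by rewrite opprD addrACA.
Qed.

Lemma end_br_alt A : end_br A A = 0.
Proof. exact: subrr. Qed.

Lemma end_jacobi A B C :
  end_br A (end_br B C) + end_br B (end_br C A) + end_br C (end_br A B) = 0.
Proof. by rewrite /end_br !mulmxBr !mulmxBl !mulmxA jacobi_cancel. Qed.

Definition EndLie : lieAlg F :=
  LieAlg end_scaleDr end_scaleDl end_scaleA end_scale1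
         end_brl end_brr end_br_alt end_jacobi.

Lemma lie_hom_End0 (K : lieAlg F) (rho : K -> 'M[L]_s) :
  lie_hom_End rho -> rho 0 = 0.
Proof.
case=> rho_lin _; have := rho_lin 1 0 0.
rewrite lie_scale1 addr0 !scale1r => rho00.
by apply: (addrI (rho 0)); rewrite addr0 -rho00.
Qed.

Lemma lie_hom_End_opp (K : lieAlg F) (rho : K -> 'M[L]_s) :
  lie_hom_End rho -> {morph rho : x / - x}.
Proof.
move=> rho_hom x; have := rho_hom.1 1 x (- x).
rewrite lie_scale1 subrr (lie_hom_End0 rho_hom) !scale1r => rhoxN.
by apply/eqP; rewrite -addr_eq0 addrC -rhoxN.
Qed.

End CommutatorLieAlgebra.

Section BermanMatrixRelations.
Variables (L : fieldType) (s : nat).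
Implicit Types (a b : 'M[L]_s) (c : L).

Lemma commute_iff_br0 a b : a *m b - b *m a = 0 <-> a *m b = b *m a.
Proof. by split=> [/eqP|->]; rewrite ?subr_eq0 ?subrr => // /eqP. Qed.

Lemma double_commutator_sq_scalar a b c : a *m a = c%:M ->
  a *m (a *m b - b *m a) - (a *m b - b *m a) *m a = (c *: b - a *m b *m a) *+ 2.
Proof.
move=> sq_a; rewrite mulmxBr mulmxBl !mulmxA sq_a mul_scalar_mx.
by rewrite -[b *m a *m a]mulmxA sq_a mul_mx_scalar opprB mulr2n.
Qed.

Variable (c : L).
Hypothesis (c_quarter : c = - (4%:R)^-1).

Lemma anticommute_of_berman_adj a b : (2%:R : L) != 0 -> a *m a = c%:M ->
  a *m (a *m b - b *m a) - (a *m b - b *m a) *m a = - b ->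
  a *m b = - (b *m a).
Proof.
move=> two_neq0 sq_a; rewrite (double_commutator_sq_scalar b sq_a).
move=> rel_ab.
have four_neq0 : (4%:R : L) != 0 by rewrite (natrM L 2 2) mulf_neq0.
have c_neq0 : c != 0 by rewrite c_quarter oppr_eq0 invr_eq0.
have half_defect : c *: b - a *m b *m a = - (2%:R^-1) *: b.
  apply: (scalerI two_neq0); rewrite scaler_nat rel_ab scalerA.
  by rewrite mulrN mulfV // scaleN1r.
have aba : a *m b *m a = - c *: b.
  rewrite -[a *m b *m a](subKr (c *: b)) half_defect -scalerBl.
  by congr (_ *: _); rewrite c_quarter; field; rewrite four_neq0.
have : a *m (a *m b *m a) = a *m (- c *: b) by rewrite aba.
rewrite !mulmxA sq_a mul_scalar_mx -scalemxAl -scalemxAr scaleNr.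
by rewrite -scalerN => /(scalerI c_neq0) ->; rewrite opprK.
Qed.

Lemma berman_adj_of_anticommute a b : (4%:R : L) != 0 -> a *m a = c%:M ->
  b *m a = - (a *m b) ->
  a *m (a *m b - b *m a) - (a *m b - b *m a) *m a = - b.
Proof.
move=> four_neq0 sq_a anti; rewrite (double_commutator_sq_scalar b sq_a).
have aba : a *m b *m a = - c *: b.
  by rewrite -mulmxA anti mulmxN mulmxA sq_a mul_scalar_mx scaleNr.
rewrite aba scaleNr opprK -scalerDl scalerMnl -scaleN1r.
by congr (_ *: _); rewrite c_quarter; field.
Qed.

End BermanMatrixRelations.

Lemma natr_ext_neq0 (F : fieldType) (L : fieldExtType F) k :
  [pchar F] =i pred0 -> (k.+1%:R : L) != 0.
Proof.
move=> charF0; have -> : (k.+1%:R : L) = (k.+1%:R : F)%:A.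
  by rewrite -in_algE rmorph_nat.
by rewrite scaler_eq0 oner_eq0 orbF; move/pcharf0P: charF0 => ->.
Qed.

Theorem mainTheorem5 (F : fieldType) (charF0 : [pchar F] =i pred0)
    (L : fieldExtType F) (I : L) (hI : I ^+ 2 = -1)
    (hL : (<<1%VS; I>>)%VS = fullv)
    (n : nat) (adj : rel 'I_n) (adj_sym : symmetric adj) (adj_irr : irreflexive adj)
    (K : lieAlg F) (X : 'I_n -> K) (hK : berman_presented adj X)
    (s : nat) (hs : (0 < s)%N) :
  (forall rho : K -> 'M[L]_s, gen_spin_rep X rho ->
     (forall i j, i != j -> ~~ adj i j ->
        rho (X i) *m rho (X j) = rho (X j) *m rho (X i)) /\
     (forall i j, adj i j ->
        rho (X i) *m rho (X j) = - (rho (X j) *m rho (X i)))) /\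
  (forall A : 'I_n -> 'M[L]_s,
     (forall i, A i *m A i = (- (4%:R : L)^-1)%:M) ->
     (forall i j, i != j -> ~~ adj i j -> A i *m A j = A j *m A i) ->
     (forall i j, adj i j -> A i *m A j = - (A j *m A i)) ->
     exists rho : K -> 'M[L]_s,
       (forall i, rho (X i) = A i) /\ lie_hom_End rho /\ gen_spin_rep X rho).
Proof.
have two_neq0 : (2%:R : L) != 0 by exact: natr_ext_neq0 1 charF0.
have four_neq0 : (4%:R : L) != 0 by exact: natr_ext_neq0 3 charF0.
have [[X_adj X_nonadj] X_universal] := hK.
split.
  move=> rho [rho_hom rho_sq]; have rho_br := rho_hom.2.
  split=> [i j ij nadj_ij | i j adj_ij].
    by apply/commute_iff_br0; rewrite -rho_br X_nonadj // lie_hom_End0.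
  apply: (anticommute_of_berman_adj (erefl _) two_neq0 (rho_sq i)).
  by rewrite -!rho_br X_adj // lie_hom_End_opp.
move=> A A_sq A_comm A_anti.
have A_berman : berman_rel adj (A : 'I_n -> EndLie L s).
  split=> [i j adj_ij | i j ij nadj_ij]; last exact/commute_iff_br0/A_comm.
  apply: (berman_adj_of_anticommute (erefl _) four_neq0 (A_sq i)).
  by apply: A_anti; rewrite adj_sym.
have [rho [rho_hom rho_X _]] := X_universal _ _ A_berman.
exists rho; split=> //; split=> //; split=> // i.
by rewrite rho_X A_sq.
Qed.
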